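(* There exist a connected graph $G$ of order $n\geq 2$ and a graph $H$ with connected components $H_1,\dots,H_k$ such that $\chi_L(G\odot H)=\chi_L(G)+\sum_{t=1}^{k}\bigl(\chi_L(H_t+K_1)-1\bigr)$.
   Context: All graphs are finite and simple. A $k$-coloring of a connected graph $G$ is a map $c:V(G)\to\{1,\dots,k\}$ with $c(u)\neq c(v)$ for adjacent $u,v$; it induces the partition $\Pi=\{C_1,\dots,C_k\}$ into color classes $C_i=c^{-1}(i)$. The color code of $v$ is $c_\Pi(v)=(d(v,C_1),\dots,d(v,C_k))$ with $d(v,C_i)=\min\{d(v,x): x\in C_i\}$ (graph distance). $c$ is a locating coloring if distinct vertices have distinct color codes; the locating-chromatic number $\chi_L(G)$ is the least $k$ for which a locating $k$-coloring exists. The corona product $G\odot H$ of a graph $G$ with vertex set $\{a_1,\dots,a_n\}$ and a graph $H$ is obtained from one copy of $G$ and $n$ disjoint copies of $H$ by joining $a_i$ to every vertex of the $i$-th copy of $H$. For a graph $F$, $F+K_1$ denotes the join of $F$ with a single new vertex adjacent to all vertices of $F$. *)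

From mathcomp Require Import all_boot.
Set Implicit Arguments. Unset Strict Implicit. Unset Printing Implicit Defensive.

Definition simple_graph (T : finType) (e : rel T) : Prop :=
  symmetric e /\ irreflexive e.

Definition connected_graph (T : finType) (e : rel T) : bool :=
  [forall u, forall v, connect e u v].

Fixpoint walkn (T : finType) (e : rel T) (n : nat) (u v : T) : bool :=
  if n is m.+1 then [exists w, e u w && walkn e m w v] else u == v.

(* graph distance: least n with a walk of length n (correct for connected graphs;
   returns #|T| if v is unreachable from u) *)
Definition gdist (T : finType) (e : rel T) (u v : T) : nat :=
  find (fun n => walkn e n u v) (iota 0 #|T|).

Definition dist_class (T : finType) (e : rel T) (k : nat) (c : {ffun T -> 'I_k})
  (v : T) (i : 'I_k) : nat :=
  \big[minn/#|T|]_(x | c x == i) gdist e v x.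

Definition color_code (T : finType) (e : rel T) (k : nat) (c : {ffun T -> 'I_k})
  (v : T) : {ffun 'I_k -> nat} :=
  [ffun i => dist_class e c v i].

Definition proper_coloring (T : finType) (e : rel T) (k : nat) (c : {ffun T -> 'I_k}) : bool :=
  [forall u, forall v, e u v ==> (c u != c v)].

Definition surj_coloring (T : finType) (k : nat) (c : {ffun T -> 'I_k}) : bool :=
  [forall i, exists v, c v == i].

Definition locating_coloring (T : finType) (e : rel T) (k : nat) (c : {ffun T -> 'I_k}) : bool :=
  [&& proper_coloring e c, surj_coloring c & injectiveb (color_code e c)].

Definition has_locating_coloring (T : finType) (e : rel T) (k : nat) : bool :=
  [exists c : {ffun T -> 'I_k}, locating_coloring e c].

(* locating-chromatic number: least k admitting a locating k-coloring
   (for a connected graph on #|T| >= 1 vertices, k = #|T| always works) *)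
Definition chiL (T : finType) (e : rel T) : nat :=
  \big[minn/#|T|]_(k < #|T|.+1 | has_locating_coloring e k) k.

(* corona product G (.) H : vertices inl a (copy of G) and inr (a, x) (x in the a-th copy of H) *)
Definition corona_rel (T S : finType) (eG : rel T) (eH : rel S) : rel (T + T * S) :=
  fun p q =>
    match p, q with
    | inl a, inl b => eG a b
    | inr (a, x), inr (b, y) => (a == b) && eH x y
    | inl a, inr (b, _) => a == b
    | inr (a, _), inl b => a == b
    end.

Definition components (S : finType) (eH : rel S) : {set {set S}} :=
  [set [set y | connect eH x y] | x : S].

(* H_C + K_1 : the component induced on C, joined with a new vertex None *)
Definition join_K1_rel (S : finType) (eH : rel S) (C : {set S}) :
  rel (option {x : S | x \in C}) :=
  fun p q =>
    match p, q with
    | None, None => false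
    | None, Some _ => true
    | Some _, None => true
    | Some a, Some b => eH (val a) (val b)
    end.

Arguments join_K1_rel [S] eH C _ _.

(* The corona of K2 with K1 is the path P4.  Two adjacent vertices need two
   colours, and in a proper 2-colouring two distinct neighbours of a common
   vertex get the same colour code, so chi_L(P4) = 3; on the other hand
   chi_L(K2) = 2 and K1 + K1 = K2.  Hence 3 = 2 + (2 - 1). *)
From HB Require Import structures.
From mathcomp Require Import all_boot zify.
Set Implicit Arguments. Unset Strict Implicit. Unset Printing Implicit Defensive.

(* [dist_class] is an iterated [minn], for which [bigD1] needs a commutative
   semigroup structure. *)
HB.instance Definition _ := SemiGroup.isComLaw.Build nat minn minnA minnC.

Section Distance.
Variables (T : finType) (e : rel T).

Lemma gdist_refl u : gdist e u u = 0.
Proof.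
have : 0 < #|T| by apply/card_gt0P; exists u.
by rewrite /gdist; case: #|T| => // n _ /=; rewrite eqxx.
Qed.

Lemma gdist_gt0 u v : u != v -> 0 < gdist e u v.
Proof.
move=> neq_uv; have : 0 < #|T| by apply/card_gt0P; exists u.
by rewrite /gdist; case: #|T| => // n _ /=; rewrite (negbTE neq_uv).
Qed.

Lemma gdist_adj u v : u != v -> e u v -> gdist e u v = 1.
Proof.
move=> neq_uv euv; have : 1 < #|T| by apply/card_gt1P; exists u, v.
rewrite /gdist; case: #|T| => [|[|n]] // _ /=; rewrite (negbTE neq_uv).
by have -> : [exists w, e u w && (w == v)] by apply/existsP; exists v; rewrite euv eqxx.
Qed.

Lemma gdist_nonadj u v : u != v -> ~~ e u v -> 1 < gdist e u v.
Proof.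
move=> neq_uv neuv; have : 1 < #|T| by apply/card_gt1P; exists u, v.
rewrite /gdist; case: #|T| => [|[|n]] // _ /=; rewrite (negbTE neq_uv).
have -> // : [exists w, e u w && (w == v)] = false.
by apply/existsP => -[w /andP[euw /eqP wv]]; rewrite -wv euw in neuv.
Qed.

End Distance.

Section ColorCode.
Variables (T : finType) (e : rel T) (k : nat) (c : {ffun T -> 'I_k}).

Lemma dist_class_self v : dist_class e c v (c v) = 0.
Proof. by rewrite /dist_class (bigD1 v) //= gdist_refl min0n. Qed.

Lemma dist_class_gt0 v i : c v != i -> 0 < dist_class e c v i.
Proof.
move=> cvi; have T_gt0 : 0 < #|T| by apply/card_gt0P; exists v.
rewrite /dist_class; elim/big_ind: _ => // [x y|x /eqP cx]; first by rewrite leq_min => ->.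
by apply: gdist_gt0; apply: contra_neq cvi => ->.
Qed.

Lemma dist_class_adj v w : e v w -> c v != c w -> dist_class e c v (c w) = 1.
Proof.
move=> evw cvw; apply/eqP; rewrite eqn_leq dist_class_gt0 // andbT.
rewrite /dist_class (bigD1 w) //= gdist_adj ?geq_minl //.
by apply: contra_neq cvw => ->.
Qed.

(* An empty colour class is at junk distance [#|T|], hence the size bound. *)
Lemma dist_class_eq1 v i : 1 < #|T| -> dist_class e c v i = 1 ->
  exists2 w, c w = i & e v w.
Proof.
move=> T_gt1 dvi; have [cvi|cvi] := eqVneq (c v) i.
  by rewrite -cvi dist_class_self in dvi.
have [/existsP[w /andP[/eqP cw evw]]|no_nbr] := boolP [exists w, (c w == i) && e v w].
  by exists w.
suff : 1 < dist_class e c v i by rewrite dvi.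
rewrite /dist_class; elim/big_ind: _ => // [x y|x /eqP cx]; first by rewrite leq_min => ->.
apply: gdist_nonadj; first by apply: contra_neq cvi => ->.
by apply: contra no_nbr => evx; apply/existsP; exists x; rewrite cx eqxx.
Qed.

Lemma color_code_eq_color u v : color_code e c u = color_code e c v -> c u = c v.
Proof.
move=> /ffunP/(_ (c u)); rewrite !ffunE dist_class_self => /esym dvu.
by apply/esym/eqP/negPn/negP => /dist_class_gt0; rewrite dvu.
Qed.

Lemma injective_color_code : injective c -> injectiveb (color_code e c).
Proof. by move=> inj_c; apply/injectiveP => u v /color_code_eq_color /inj_c. Qed.

End ColorCode.

Section LocatingChromaticNumber.
Variables (T : finType) (e : rel T).

Lemma proper_coloring_adj k (c : {ffun T -> 'I_k}) u v :
  proper_coloring e c -> e u v -> c u != c v.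
Proof. by move/forallP/(_ u)/forallP/(_ v)/implyP. Qed.

Lemma proper_coloring_gt1 k (c : {ffun T -> 'I_k}) u v :
  proper_coloring e c -> e u v -> 1 < k.
Proof.
move=> /proper_coloring_adj/[apply] cuv; rewrite ltnNge; apply: contra cuv => k_le1.
by apply/eqP/val_inj => /=; have := ltn_ord (c u); have := ltn_ord (c v); lia.
Qed.

Lemma has_locating_coloring_card : irreflexive e -> has_locating_coloring e #|T|.
Proof.
move=> irr_e; apply/existsP; exists [ffun x => enum_rank x]; apply/and3P; split.
- apply/forallP => u; apply/forallP => v; apply/implyP => euv; rewrite !ffunE.
  by rewrite (inj_eq enum_rank_inj); apply: contraTneq euv => ->; rewrite irr_e.
- by apply/forallP => i; apply/existsP; exists (enum_val i); rewrite ffunE enum_valK.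
- by apply: injective_color_code => u v; rewrite !ffunE => /enum_rank_inj.
Qed.

(* [p] and [r] share a colour and are both at distance 1 from the other one. *)
Lemma two_coloring_code_nbrs (c : {ffun T -> 'I_2}) p q r :
  proper_coloring e c -> e p q -> e r q -> color_code e c p = color_code e c r.
Proof.
move=> proper_c epq erq.
have [cpq crq] := (proper_coloring_adj proper_c epq, proper_coloring_adj proper_c erq).
have two_colors (x y z : 'I_2) : x != y -> z != y -> x = z.
  by case: x y z => [[|[|//]] ?] [[|[|//]] ?] [[|[|//]] ?] // _ _; apply/val_inj.
have cpr := two_colors _ _ _ cpq crq.
apply/ffunP => i; rewrite !ffunE; have [<-|ciq] := eqVneq (c q) i.
  by rewrite !dist_class_adj.
have <- := two_colors _ _ i cpq; last by rewrite eq_sym.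
by rewrite {2}cpr !dist_class_self.
Qed.

Lemma no_locating_coloring_lt2 k u v : e u v -> k < 2 -> ~~ has_locating_coloring e k.
Proof.
move=> euv k_lt2; apply/existsP => -[c /and3P[proper_c _ _]].
by have := proper_coloring_gt1 proper_c euv; rewrite ltnNge -ltnS k_lt2.
Qed.

Lemma no_locating_coloring_2 p q r :
  e p q -> e r q -> p != r -> ~~ has_locating_coloring e 2.
Proof.
move=> epq erq neq_pr; apply/existsP => -[c /and3P[proper_c _ /injectiveP inj_code]].
by have := inj_code _ _ (two_coloring_code_nbrs proper_c epq erq); apply/eqP.
Qed.

Lemma chiL_eq_least m : irreflexive e -> has_locating_coloring e m ->
  (forall k, k < m -> ~~ has_locating_coloring e k) -> chiL e = m.
Proof.
move=> irr_e loc_m min_m.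
have m_le_card : m <= #|T|.
  by rewrite leqNgt; apply: contraL (has_locating_coloring_card irr_e) => /min_m.
apply/eqP; rewrite eqn_leq; apply/andP; split.
  by rewrite /chiL (bigD1 (Ordinal (m_le_card : m < #|T|.+1))) ?geq_minl.
rewrite /chiL; elim/big_ind: _ => // [x y|k loc_k]; first by rewrite leq_min => ->.
by rewrite leqNgt; apply: contraL loc_k => /min_m.
Qed.

Lemma chiL_card2 u v : irreflexive e -> #|T| = 2 -> e u v -> chiL e = 2.
Proof.
move=> irr_e card_T euv; apply: chiL_eq_least => //.
  by rewrite -card_T; apply: has_locating_coloring_card.
by move=> k; apply: no_locating_coloring_lt2 euv.
Qed.

End LocatingChromaticNumber.

Definition K2 : rel bool := fun a b => a != b.
Definition K1 : rel unit := fun _ _ => false.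

Lemma simple_graph_K2 : simple_graph K2.
Proof. by split=> [a b|a]; rewrite /K2 1?eq_sym ?eqxx. Qed.

Lemma connected_graph_K2 : connected_graph K2.
Proof.
apply/forallP=> u; apply/forallP=> v.
by case: u v => [] []; rewrite ?connect0 //; apply: connect1.
Qed.

Lemma chiL_K2 : chiL K2 = 2.
Proof. by apply: (@chiL_card2 _ _ false true); [case: simple_graph_K2 | rewrite card_bool |]. Qed.

Definition corona_K2_K1_coloring : {ffun bool + bool * unit -> 'I_3} :=
  [ffun p => match p with inl false => @Ordinal 3 1 isT | inl true => @Ordinal 3 2 isT
                  | inr _ => @Ordinal 3 0 isT end].

Lemma locating_corona_K2_K1_coloring :
  locating_coloring (corona_rel K2 K1) corona_K2_K1_coloring.
Proof.
apply/and3P; split.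
- apply/forallP => u; apply/forallP => v; apply/implyP.
  by case: u => [[]|[[] []]]; case: v => [[]|[[] []]]; rewrite !ffunE /K2 /K1.
- apply/forallP => -[[|[|[|//]]] ?]; apply/existsP;
    [exists (inr (false, tt)) | exists (inl false) | exists (inl true)];
    by rewrite ffunE; apply/eqP/val_inj.
(* Only the two pendant vertices share a colour, and only one of them is
   adjacent to colour 1. *)
have card_gt1 : 1 < #|{: bool + bool * unit}| by rewrite card_sum card_prod card_bool card_unit.
have pendants_apart : color_code (corona_rel K2 K1) corona_K2_K1_coloring (inr (false, tt))
                   != color_code (corona_rel K2 K1) corona_K2_K1_coloring (inr (true, tt)).
  have adj_false : dist_class (corona_rel K2 K1) corona_K2_K1_coloring
                     (inr (false, tt)) (corona_K2_K1_coloring (inl false)) = 1.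
    by apply: dist_class_adj; rewrite // !ffunE.
  apply/negP => /eqP/ffunP/(_ (corona_K2_K1_coloring (inl false))).
  rewrite ffunE adj_false ffunE.
  by move/esym/dist_class_eq1 => /(_ card_gt1) [[[]|[[] []]]]; rewrite !ffunE.
apply/injectiveP => u v code_uv; have := color_code_eq_color code_uv.
move: u v code_uv => [[]|[[] []]] [[]|[[] []]]; rewrite !ffunE //= => code_uv.
all: by move: pendants_apart; rewrite code_uv eqxx.
Qed.

Lemma chiL_corona_K2_K1 : chiL (corona_rel K2 K1) = 3.
Proof.
apply: chiL_eq_least.
- by case=> [[]|[[] []]].
- by apply/existsP; exists corona_K2_K1_coloring; apply: locating_corona_K2_K1_coloring.
move=> k; rewrite ltnS leq_eqVlt => /predU1P[->|].
  by apply: (@no_locating_coloring_2 _ _ (inr (false, tt)) (inl false) (inl true)).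
by apply: (@no_locating_coloring_lt2 _ _ _ (inl false) (inl true)).
Qed.

Lemma components_K1 : components K1 = [set setT].
Proof.
have comp_tt : [set y | connect K1 tt y] = setT by apply/setP => -[]; rewrite !inE connect0.
apply/setP => C; rewrite !inE; apply/imsetP/eqP => [[[] _ ->] //|->].
by exists tt.
Qed.

Lemma chiL_join_K1_K1 : chiL (join_K1_rel K1 [set: unit]) = 2.
Proof.
pose s : {x : unit | x \in [set: unit]} := exist _ tt (in_setT tt).
apply: (@chiL_card2 _ _ None (Some s)); [by case | | by []].
by rewrite card_option card_sig cardsT card_unit.
Qed.

Theorem theorem3 :
  exists (T S : finType) (eG : rel T) (eH : rel S),
    simple_graph eG /\ connected_graph eG /\ 2 <= #|T| /\
    simple_graph eH /\ 0 < #|S| /\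
    chiL (corona_rel eG eH) =
      chiL eG + \sum_(C in components eH) (chiL (join_K1_rel eH C) - 1).
Proof.
exists bool, unit, K2, K1; split; [|split; [|split; [|split; [|split]]]].
- exact: simple_graph_K2.
- exact: connected_graph_K2.
- by rewrite card_bool.
- by [].
- by rewrite card_unit.
by rewrite components_K1 big_set1 chiL_join_K1_K1 chiL_corona_K2_K1 chiL_K2.
Qed.
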